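(* Let $\mathbf H\subset GL_m(\mathbb C)$ be a finite unitary group with generating set $X_{\mathbf H}$ and $\mathbf G=\mathbf H\wr\mathrm{Sym}_n$, with the subgroup sequence, coset leaders, initial vector and generating sets $X_k$ of $\mathbf G_k$ described in the context. Assume the Nearest Neighbors Property holds for $X_{2n-1}$. Let $g\in\mathbf G$. If a received vector lies in the decoding region containing a nearest neighbor of $g^{-1}\mathbf x_0$, then the subgroup decoding algorithm decodes it to a group element whose canonical form as a product of coset leaders differs from that of $g$ in only one factor.
   Context: $\mathbf G$ is the group of $mn\times mn$ block permutation matrices with nonzero blocks in $\mathbf H$. Subgroups: $\mathbf G_0=\{I\}$, $\mathbf G_{2l-1}=(\mathbf H\wr\mathrm{Sym}_l)\oplus\{I_{m(n-l)}\}$ ($1\le l\le n$), $\mathbf G_{2l}=(\mathbf H\wr\mathrm{Sym}_l)\oplus\mathbf H\oplus\{I_{m(n-l-1)}\}$ ($1\le l\le n-1$). Coset leaders: $\operatorname{CL}(\mathbf G_1/\mathbf G_0)=\mathbf G_1$; $\operatorname{CL}(\mathbf G_{2l}/\mathbf G_{2l-1})=\{(1,\dots,1,h,1,\dots,1):h\in\mathbf H\text{ in slot }l+1\}$; $\operatorname{CL}(\mathbf G_{2l+1}/\mathbf G_{2l})=\{(j\ j{+}1\ \cdots\ l{+}1):1\le j\le l+1\}$; every $g$ is uniquely $c_{2n-1}\cdots c_1$ with $c_k\in\operatorname{CL}(\mathbf G_k/\mathbf G_{k-1})$ (canonical form). Initial vector $\mathbf x_0=(u_1\mathbf v_0,\dots,u_n\mathbf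 v_0)$, $\mathbf v_0\in\mathbb C^m$ a unit vector such that the identity is the unique $h\in\mathbf H$ minimizing $\|h\mathbf v_0-\mathbf v_0\|$, reals $0<u_1<\cdots<u_n$, $\|\mathbf x_0\|=1$. Generators: $X_{2l-1}=\{(h,1,\dots,1):h\in X_{\mathbf H}\}\cup\{(1\,2),\dots,(l{-}1\ l)\}$, $X_{2l}=X_{2l-1}\cup\{(1,\dots,1,h,1,\dots,1):h\in\mathbf H\text{ in slot }l+1\}$. $S=\operatorname{Stab}_{\mathbf G}(\mathbf x_0)$; $d_{min}=\min_{a\notin S}\|a\mathbf x_0-\mathbf x_0\|$; nearest neighbors of a codeword $\mathbf u\in\mathbf G\mathbf x_0$ are codewords $\mathbf v$ with $\|\mathbf u-\mathbf v\|=d_{min}$; $N_{\mathbf G}=\{a\in\mathbf G:a\mathbf x_0\text{ is a nearest neighbor of }\mathbf x_0\}$; Nearest Neighbors Property for $X$: $N_{\mathbf G}\subseteq X\cup X^{-1}$. Decoding region $\operatorname{DR}(h)=\{\mathbf x:\|h\mathbf x-\mathbf x_0\|<\|a\mathbf x-\mathbf x_0\|\ \forall a\notin Sh\}$, which contains $h^{-1}\mathbf x_0$. Subgroup decoding algorithm: $\mathbf r_0=\mathbf r$; for $k=1,\dots,2n-1$ choose $d_k\in\operatorname{CL}(\mathbf G_k/\mathbf G_{k-1})$ minimizing $\|a\mathbf r_{k-1}-\mathbf x_0\|$ (ties broken by a fixed ordering), $\mathbf r_k=d_k\mathbf r_{k-1}$; output $d_{2n-1}\cdots d_1$. *)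

From mathcomp Require Import all_boot all_order all_algebra all_fingroup.
Set Implicit Arguments. Unset Strict Implicit. Unset Printing Implicit Defensive.
Import Order.TTheory GRing.Theory Num.Theory.
Local Open Scope ring_scope.

Section Wreath.
(* C : the complex field (any algebraically closed numeric field, e.g. algC,
   or complex R for a real closed R).  H is given as an abstract finite group
   hT together with a faithful unitary representation rho : hT -> GL_m(C);
   the matrix group is H = rho(hT). *)
Variables (C : numClosedFieldType) (n m : nat) (hT : finGroupType)
          (rho : hT -> 'M[C]_m).

(* An element of G = H wr Sym_n : a block permutation matrix, encoded as a
   pair (s, f) : the block in block-row i is rho (f i), placed in block-column
   s^-1 i (standard permutation-matrix convention: block x_j is moved to
   position s j). *)
Definition elt := ('S_n * {ffun 'I_n -> hT})%type.
Definition vec := 'I_n -> 'cV[C]_m.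

Definition wact (a : elt) (x : vec) : vec :=
  fun i => rho (a.2 i) *m x ((a.1^-1)%g i).

Definition unitary (M : 'M[C]_m) : Prop :=
  M *m (map_mx (fun z => z^*) M)^T = 1%:M.

Definition vnormm (y : 'cV[C]_m) : C := sqrtC (\sum_(j < m) `|y j ord0| ^+ 2).
Definition vnorm (x : vec) : C :=
  sqrtC (\sum_(i < n) \sum_(j < m) `|x i j ord0| ^+ 2).
Definition dist (x y : vec) : C := vnorm (fun i => x i - y i).

Definition one_ffun : {ffun 'I_n -> hT} := [ffun => 1%g].

(* cycle (j j+1 ... l+1), with 0-based J = j-1, L = l *)
Definition is_cycle (s : 'S_n) (J L : nat) : Prop :=
  forall i : 'I_n, val (s i) =
    (if (J <= i < L)%N then i.+1 else if (val i == L) then J else val i).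

(* transposition (i+1 i+2) in 1-based notation, i.e. of 0-based i, i+1 *)
Definition is_adj_transp (s : 'S_n) (i : nat) : Prop :=
  forall p : 'I_n, val (s p) =
    (if val p == i then i.+1 else if val p == i.+1 then i else val p).

(* coset leaders CL(G_k / G_{k-1}), k = 1 .. 2n-1 *)
Definition inCL (k : nat) (a : elt) : Prop :=
  if k == 1%N then a.1 = 1%g /\ (forall i : 'I_n, val i != 0%N -> a.2 i = 1%g)
  else if odd k then
    a.2 = one_ffun /\ exists J, (J <= k./2)%N /\ is_cycle a.1 J k./2
  else (* k = 2l : h in slot l+1, i.e. 0-based index l *)
    a.1 = 1%g /\ (forall i : 'I_n, val i != k./2 -> a.2 i = 1%g).

Definition inX (XH : {set hT}) (a : elt) : Prop :=
  (a.1 = 1%g /\ (exists i0 : 'I_n, val i0 = 0%N /\ a.2 i0 \in XH) /\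
      (forall i : 'I_n, val i != 0%N -> a.2 i = 1%g))
  \/ (a.2 = one_ffun /\ exists i, (i.+1 < n)%N /\ is_adj_transp a.1 i).

Fixpoint wcomp (c : nat -> elt) (k : nat) (x : vec) : vec :=
  match k with
  | 0%N => x
  | k'.+1 => wact (c k'.+1) (wcomp c k' x)
  end.

Variables (v0 : 'cV[C]_m) (u : 'I_n -> C).

Definition x0 : vec := fun i => u i *: v0.

Definition stab (a : elt) : Prop := wact a x0 =1 x0.

Definition inSh (a h : elt) : Prop :=
  exists s, stab s /\ forall x, wact a x =1 wact s (wact h x).

Definition DR (h : elt) (x : vec) : Prop :=
  forall a, ~ inSh a h -> dist (wact h x) x0 < dist (wact a x) x0.

Definition is_dmin (d : C) : Prop :=
  (exists a, ~ stab a /\ dist (wact a x0) x0 = d) /\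
  (forall a, ~ stab a -> d <= dist (wact a x0) x0).

Definition codeword (v : vec) : Prop := exists b, v =1 wact b x0.

Definition nearest_neighbor (w v : vec) : Prop :=
  codeword w /\ codeword v /\ is_dmin (dist w v).

Definition NN_property (X : elt -> Prop) : Prop :=
  forall a, nearest_neighbor x0 (wact a x0) ->
    X a \/ exists b, X b /\ forall x, wact b (wact a x) =1 x.

Definition canonical_form (g : elt) (c : nat -> elt) : Prop :=
  (forall k, (0 < k <= 2 * n - 1)%N -> inCL k (c k)) /\
  forall x, wact g x =1 wcomp c (2 * n - 1) x.

(* the subgroup decoding algorithm, ties broken by the fixed ordering
   given by the injective rank function, produces d_1, ..., d_{2n-1} on r *)
Definition decoding_run (rank : elt -> nat) (r : vec) (d : nat -> elt) : Prop :=
  forall k, (0 < k <= 2 * n - 1)%N ->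
    inCL k (d k) /\
    forall a, inCL k a ->
      dist (wact (d k) (wcomp d k.-1 r)) x0 <= dist (wact a (wcomp d k.-1 r)) x0 /\
      (dist (wact (d k) (wcomp d k.-1 r)) x0 = dist (wact a (wcomp d k.-1 r)) x0 ->
         (rank (d k) <= rank a)%N).

End Wreath.

(* The decoder output [out] is a maximum-likelihood element.  After stage
   2l+1 the first l+1 blocks of the partially decoded vector are each optimal
   under H and their correlations with v0 are sorted: the slot stage optimizes
   one block, and the optimal cycle (J ... l) inserts the new block into the
   sorted list, as otherwise a neighbouring cycle would do better.  Since the
   weights u_i increase, the rearrangement inequality then shows that no
   element of G brings r closer to x0.  Hence [out] lies in the coset S h of
   the decoding region containing r and v, so [out v = x0], and g out^-1 maps
   x0 to g v, a nearest neighbour of x0; by the Nearest Neighbors Property it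
   is a generator or the inverse of one.  Finally the canonical factors of an
   element can be read off from the element itself (slot factors from its
   H-components, cycle factors from the lower counts of its permutation), and
   multiplying by a generator changes only one of these data. *)

From mathcomp Require Import all_boot all_order all_algebra all_fingroup.
From mathcomp Require Import ring zify.
From Stdlib Require Import Classical_Prop.
Import Order.TTheory GRing.Theory Num.Theory.
Local Open Scope ring_scope.
Set Implicit Arguments. Unset Strict Implicit. Unset Printing Implicit Defensive.

Section WreathGroup.
Variables (C : numClosedFieldType) (n m : nat) (hT : finGroupType)
          (rho : hT -> 'M[C]_m).
Hypothesis rho1 : rho 1%g = 1%:M.
Hypothesis rhoM : forall a b, rho (a * b)%g = rho a *m rho b.

Definition emul (a b : elt n hT) : elt n hT :=
  ((b.1 * a.1)%g, [ffun i => (a.2 i * b.2 ((a.1^-1)%g i))%g]).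
Definition eone : elt n hT := (1%g, one_ffun n hT).
Definition einv (a : elt n hT) : elt n hT :=
  ((a.1^-1)%g, [ffun i => ((a.2 (a.1 i))^-1)%g]).

Lemma wact_ext a (x y : vec C n m) : x =1 y -> wact rho a x =1 wact rho a y.
Proof. by move=> e i; rewrite /wact e. Qed.

Lemma wact_mul a b (x : vec C n m) :
  wact rho (emul a b) x =1 wact rho a (wact rho b x).
Proof. by move=> i; rewrite /wact /= ffunE invMg permM rhoM mulmxA. Qed.

Lemma wact_one (x : vec C n m) : wact rho eone x =1 x.
Proof. by move=> i; rewrite /wact /= ffunE rho1 invg1 perm1 mul1mx. Qed.

Lemma emulVl a : emul (einv a) a = eone.
Proof.
rewrite /emul /einv /eone /=; congr pair; first by rewrite mulgV.
by apply/ffunP=> i; rewrite !ffunE invgK mulVg.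
Qed.

Lemma wact_invK a (x : vec C n m) : wact rho (einv a) (wact rho a x) =1 x.
Proof. by move=> i; rewrite -wact_mul emulVl wact_one. Qed.

Lemma emul_divK a b : emul (emul a (einv b)) b = a.
Proof.
case: a => s f; rewrite /emul /einv /=; congr pair; first by rewrite mulgA mulgV mul1g.
by apply/ffunP => i; rewrite !ffunE invMg invgK permM mulgKV.
Qed.

End WreathGroup.

Section Norms.
Variables (C : numClosedFieldType) (n m : nat) (hT : finGroupType)
          (rho : hT -> 'M[C]_m).
Hypothesis rhoU : forall h, unitary (rho h).

Definition cnorm2 (y : 'cV[C]_m) : C := \sum_j y j 0 * (y j 0)^*.
Definition vnorm2 (x : vec C n m) : C := \sum_i cnorm2 (x i).

Lemma cnorm2_ge0 y : 0 <= cnorm2 y.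
Proof. by apply: sumr_ge0 => j _; apply: mul_conjC_ge0. Qed.

Lemma vnorm2_ge0 (x : vec C n m) : 0 <= vnorm2 x.
Proof. by apply: sumr_ge0 => i _; apply: cnorm2_ge0. Qed.

Lemma vnormE (x : vec C n m) : vnorm x = sqrtC (vnorm2 x).
Proof. by congr sqrtC; apply: eq_bigr => i _; apply: eq_bigr => j _; rewrite normCK. Qed.

Lemma cnorm2_mx y : cnorm2 y = (y^T *m map_mx Num.conj y) 0 0.
Proof. by rewrite mxE; apply: eq_bigr => j _; rewrite !mxE. Qed.

Lemma cnorm2_unitary M y : unitary M -> cnorm2 (M *m y) = cnorm2 y.
Proof.
move=> MU; have MUl : (map_mx Num.conj M)^T *m M = 1%:M by apply: mulmx1C.
have MUr : M^T *m map_mx Num.conj M = 1%:M.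
  by rewrite -[M^T *m _]trmxK trmx_mul trmxK MUl trmx1.
by rewrite !cnorm2_mx trmx_mul map_mxM mulmxA -[y^T *m M^T *m _]mulmxA MUr mulmx1.
Qed.

Lemma vnorm2_ext (x y : vec C n m) : x =1 y -> vnorm2 x = vnorm2 y.
Proof. by move=> e; apply: eq_bigr => i _; rewrite e. Qed.

Lemma vnorm2_wact a (x : vec C n m) : vnorm2 (wact rho a x) = vnorm2 x.
Proof.
rewrite /vnorm2 /wact; under eq_bigr => i _ do rewrite cnorm2_unitary //.
by rewrite [RHS](reindex_inj (@perm_inj _ (a.1^-1)%g)).
Qed.

Lemma dist_ext (x x' y y' : vec C n m) :
  x =1 x' -> y =1 y' -> dist x y = dist x' y'.
Proof.
by move=> ex ey; rewrite /dist !vnormE; congr sqrtC; apply: vnorm2_ext => i; rewrite ex ey.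
Qed.

Lemma dist_wact a (x y : vec C n m) :
  dist (wact rho a x) (wact rho a y) = dist x y.
Proof.
rewrite /dist !vnormE -(vnorm2_wact a (fun i => x i - y i)); congr sqrtC.
by apply: vnorm2_ext => i; rewrite /wact mulmxBr.
Qed.

Lemma dist_ge0 (x y : vec C n m) : 0 <= dist x y.
Proof. by rewrite /dist vnormE sqrtC_ge0 vnorm2_ge0. Qed.

Lemma distxx (x : vec C n m) : dist x x = 0.
Proof.
rewrite /dist vnormE /vnorm2 big1 ?sqrtC0 // => i _.
by rewrite /cnorm2 big1 // => j _; rewrite !mxE subrr mul0r.
Qed.

Lemma vnormm_eq1_dim_gt0 (v : 'cV[C]_m) : vnormm v = 1 -> (0 < m)%N.
Proof.
move=> v_norm; rewrite lt0n; apply/negP => /eqP m0; move: v_norm.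
rewrite /vnormm big1 ?sqrtC0 => [/eqP|j _]; first by rewrite eq_sym oner_eq0.
by have := ltn_ord j; rewrite [X in (_ < X)%N]m0.
Qed.

End Norms.

(* Since the action is isometric, comparing distances from a*y to x0 only
   involves the correlation of a*y with x0, i.e. the weighted sum of the
   real parts 2 Re <(a y)_i, v0>. *)
Section Correlation.
Variables (C : numClosedFieldType) (n m : nat) (hT : finGroupType)
          (rho : hT -> 'M[C]_m).
Hypothesis rhoU : forall h, unitary (rho h).
Variables (v0 : 'cV[C]_m) (u : 'I_n -> C).
Hypothesis u_real : forall i, u i \is Num.real.

Definition cdot (y w : 'cV[C]_m) : C := \sum_j y j 0 * (w j 0)^*.
Definition recorr (y : 'cV[C]_m) : C := cdot y v0 + (cdot y v0)^*.
Definition corr (z : vec C n m) : C := \sum_i u i * recorr (z i).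

Lemma cnorm2B y w : cnorm2 (y - w) = cnorm2 y + cnorm2 w - (cdot y w + (cdot y w)^*).
Proof.
rewrite /cnorm2 /cdot rmorph_sum -!big_split -sumrB /=; apply: eq_bigr => j _.
rewrite !mxE rmorphB rmorphM /= conjCK; ring.
Qed.

Lemma dist_x0E (z : vec C n m) :
  dist z (x0 v0 u) = sqrtC (vnorm2 z + vnorm2 (x0 v0 u) - corr z).
Proof.
rewrite /dist vnormE; congr sqrtC.
rewrite /vnorm2 /corr -!big_split -sumrB /=; apply: eq_bigr => i _.
rewrite cnorm2B; have -> : cdot (z i) (x0 v0 u i) = u i * cdot (z i) v0.
  rewrite /cdot /x0 mulr_sumr; apply: eq_bigr => j _.
  by rewrite mxE rmorphM /= conj_Creal //; ring.
by rewrite /recorr rmorphM /= conj_Creal // mulrDr.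
Qed.

Lemma dist_x0_ge0 (z : vec C n m) : 0 <= vnorm2 z + vnorm2 (x0 v0 u) - corr z.
Proof. by rewrite -[X in 0 <= X]sqrtCK -dist_x0E exprn_ge0 ?dist_ge0. Qed.

Lemma ler_dist_x0 a b (y : vec C n m) :
  (dist (wact rho a y) (x0 v0 u) <= dist (wact rho b y) (x0 v0 u)) =
  (corr (wact rho b y) <= corr (wact rho a y)).
Proof.
by rewrite !dist_x0E ler_sqrtC ?nnegrE ?dist_x0_ge0 // !vnorm2_wact // lerD2l lerN2.
Qed.

End Correlation.

Section Rearrangement.
Variables (R : numDomainType) (n : nat) (u w : 'I_n -> R).
Hypothesis u_mono : forall i j : 'I_n, (i <= j)%N -> u i <= u j.
Hypothesis w_mono : forall i j : 'I_n, (i <= j)%N -> w i <= w j.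

(* Induction on the number of points not fixed by s: composing with the
   transposition that puts N back in place does not decrease the sum. *)
Lemma rearrangement_le_fix N (s : 'S_n) :
  (forall i : 'I_n, (N <= i)%N -> s i = i) ->
  \sum_i u i * w (s i) <= \sum_i u i * w i.
Proof.
elim: N s => [|N IH] s s_fix.
  by rewrite le_eqVlt; apply/orP; left; apply/eqP/eq_bigr => i _; rewrite s_fix.
have [NL|Nn] := ltnP N n; last first.
  by apply: IH => i Ni; move: (ltn_ord i); rewrite ltnNge (leq_trans Nn Ni).
pose L := Ordinal NL.
have fix_gt : forall i : 'I_n, (N < i)%N -> s i = i by move=> i /s_fix.
have [sL|sL] := eqVneq (s L) L.
  apply: IH => i Ni; have [/fix_gt //|iN] := ltnP N i.
  by have -> : i = L by apply/val_inj/eqP; rewrite /= eqn_leq Ni iN.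
pose t := (s^-1)%g L.
have st : s t = L by rewrite permKV.
have tL : t != L by apply: contra_neq sL => e; rewrite -{1}e st.
have tN : (t < N)%N.
  rewrite ltnNge; apply/negP => Nt; have [/fix_gt|tN] := ltnP N t.
    by rewrite st => e; move: tL; rewrite e eqxx.
  by case/negP: tL; apply/eqP/val_inj/eqP; rewrite /= eqn_leq Nt tN.
have sLN : (s L < N)%N.
  rewrite ltnNge; apply/negP => NsL; have [/fix_gt/perm_inj e|sLN] := ltnP N (s L).
    by move: sL; rewrite e eqxx.
  by case/negP: sL; apply/eqP/val_inj/eqP; rewrite /= eqn_leq NsL sLN.
pose tau := tperm t L.
apply: (le_trans _ (IH (tau * s)%g _)); last first.
  move=> i Ni; rewrite permM; have [->|iL] := eqVneq i L; first by rewrite tpermR st.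
  have Ni' : (N < i)%N by rewrite ltn_neqAle Ni andbT; apply: contra_neq iL => e; apply/val_inj.
  have it : i != t by apply: contra_ltnN tN => /eqP <-; exact: ltnW.
  by rewrite tpermD 1?eq_sym // fix_gt.
rewrite [X in _ <= X](reindex_inj (@perm_inj _ tau)) /=.
under [X in _ <= X]eq_bigr => i _ do rewrite permM tpermK.
rewrite -subr_ge0 -sumrB (bigD1 t) //= (bigD1 L) 1?eq_sym //=.
rewrite big1 => [|i /andP[it iL]]; last by rewrite tpermD 1?eq_sym // subrr.
rewrite addr0 tpermL tpermR st.
have -> : u L * w L - u t * w L + (u t * w (s L) - u L * w (s L)) =
          (u L - u t) * (w L - w (s L)) by ring.
by apply: mulr_ge0; rewrite subr_ge0; [apply: u_mono | apply: w_mono]; apply: ltnW.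
Qed.

Lemma rearrangement_le (s : 'S_n) : \sum_i u i * w (s i) <= \sum_i u i * w i.
Proof. by apply: (@rearrangement_le_fix n) => i; rewrite leqNgt ltn_ord. Qed.

End Rearrangement.

Lemma sum_swap (R : comPzRingType) n (u w : 'I_n -> R) (s t : 'S_n) (p q : 'I_n) :
  p != q -> t p = s q -> t q = s p -> (forall i, i != p -> i != q -> t i = s i) ->
  \sum_i u (s i) * w i - \sum_i u (t i) * w i = (u (s p) - u (s q)) * (w p - w q).
Proof.
move=> pq tp tq tE; rewrite -sumrB (bigD1 p) //= (bigD1 q) 1?eq_sym //=.
rewrite big1 => [|i /andP[ip iq]]; last by rewrite tE // subrr.
by rewrite tp tq addr0; ring.
Qed.

Definition cyclev (J L i : nat) : nat :=
  if (J <= i < L)%N then i.+1 else if i == L then J else i.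

Ltac cyclev_lia := rewrite /cyclev; repeat case: ifP; lia.

Section Cycles.
Variable n : nat.
Implicit Types (s t : 'S_n) (i j p q : 'I_n).

Lemma is_cycleE s J L : is_cycle s J L -> forall i, nat_of_ord (s i) = cyclev J L i.
Proof. exact. Qed.

Lemma cycle_exists J L : (J <= L)%N -> (L < n)%N -> exists s, is_cycle s J L.
Proof.
move=> JL Ln; have cyc_lt (i : 'I_n) : (cyclev J L i < n)%N by have := ltn_ord i; cyclev_lia.
have inj : injective (fun i => Ordinal (cyc_lt i)).
  by move=> i j /(congr1 val) /= e; apply/val_inj => /=; move: e; cyclev_lia.
by exists (perm inj) => i; rewrite permE.
Qed.

Lemma is_cycle_inj s t J L : is_cycle s J L -> is_cycle t J L -> s = t.
Proof. by move=> cs ct; apply/permP => i; apply/val_inj; rewrite cs ct. Qed.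

Lemma cycle_fix s J L i : is_cycle s J L -> (J <= L)%N -> (L < i)%N -> s i = i.
Proof. by move=> cs JL Li; apply/val_inj => /=; rewrite (is_cycleE cs); cyclev_lia. Qed.

Lemma cycle_leq s J L i : is_cycle s J L -> (J <= L)%N -> (s i <= L)%N = (i <= L)%N.
Proof. by move=> cs JL; rewrite (is_cycleE cs); cyclev_lia. Qed.

Lemma cycle_ltn_mono s J L i j : is_cycle s J L -> (J <= L)%N ->
  (i < L)%N -> (j < L)%N -> (s i < s j)%N = (i < j)%N.
Proof. by move=> cs JL iL jL; rewrite !(is_cycleE cs); cyclev_lia. Qed.

Lemma cycle_succ_swap s t J L p q : is_cycle s J L -> is_cycle t J.+1 L ->
  (J < L)%N -> p = J :> nat -> q = L :> nat ->
  [/\ s p = t q, s q = t p & forall i, i != p -> i != q -> s i = t i].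
Proof.
move=> cs ct JL pJ qL; split;
  try by apply/val_inj => /=; rewrite (is_cycleE cs) (is_cycleE ct) pJ qL; cyclev_lia.
move=> i ip iq; apply/val_inj => /=; rewrite (is_cycleE cs) (is_cycleE ct).
have : (i : nat) != J by rewrite -pJ; apply: contra_neq ip => /val_inj.
have : (i : nat) != L by rewrite -qL; apply: contra_neq iq => /val_inj.
by cyclev_lia.
Qed.

End Cycles.

Section OptimalCycle.
Variables (R : numDomainType) (n : nat) (u w : 'I_n -> R).
Hypothesis u_incr : forall i j : 'I_n, (i < j)%N -> u i < u j.
Variables (s : 'S_n) (J L : nat).
Hypotheses (cs : is_cycle s J L) (JL : (J <= L)%N) (Ln : (L < n)%N).
Hypothesis s_opt : forall K (t : 'S_n), (K <= L)%N -> is_cycle t K L ->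
  \sum_i u (t i) * w i <= \sum_i u (s i) * w i.

(* Compare s with the neighbouring cycles (J-1 ... L) and (J+1 ... L), which
   differ from it by one transposition. *)
Lemma optimal_cycle_pred (p q : 'I_n) : p.+1 = J -> q = L :> nat -> w p <= w q.
Proof.
move=> pJ qL; have pL : (p < L)%N by lia.
have [t ct] := cycle_exists (n := n) (ltnW pL) Ln.
have cs' : is_cycle s p.+1 L by rewrite pJ.
have pq : p != q by apply/eqP => /(congr1 val) /=; lia.
have [tp tq tE] := cycle_succ_swap ct cs' pL erefl qL.
have : 0 <= \sum_i u (s i) * w i - \sum_i u (t i) * w i.
  by rewrite subr_ge0 (s_opt (ltnW pL) ct).
rewrite (sum_swap u w pq tp tq tE).
rewrite nmulr_rge0 ?subr_le0 // subr_lt0; apply: u_incr.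
by rewrite !(is_cycleE cs') qL; cyclev_lia.
Qed.

Lemma optimal_cycle_succ (p q : 'I_n) : p = J :> nat -> q = L :> nat -> (J < L)%N ->
  w q <= w p.
Proof.
move=> pJ qL JL'; have [t ct] := cycle_exists (n := n) JL' Ln.
have pq : p != q by apply/eqP => /(congr1 val) /=; lia.
have [sp sq sE] := cycle_succ_swap cs ct JL' pJ qL.
have : \sum_i u (t i) * w i - \sum_i u (s i) * w i <= 0.
  by rewrite subr_le0 (s_opt JL' ct).
rewrite (sum_swap u w pq sp sq sE).
rewrite nmulr_rle0 ?subr_ge0 // subr_lt0; apply: u_incr.
by rewrite !(is_cycleE ct) pJ qL; cyclev_lia.
Qed.

End OptimalCycle.

(* Composing with the cycle (J ... L) inserts the value at L into position J. *)
Lemma cycle_sorted (R : numDomainType) n (w : 'I_n -> R) (s : 'S_n) J L :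
  is_cycle s J L -> (J <= L)%N -> (L < n)%N ->
  (forall i j : 'I_n, (i <= j)%N -> (j < L)%N -> w i <= w j) ->
  (forall p q : 'I_n, p.+1 = J -> q = L :> nat -> w p <= w q) ->
  (forall p q : 'I_n, p = J :> nat -> q = L :> nat -> (J < L)%N -> w q <= w p) ->
  forall p q : 'I_n, (p <= q <= L)%N -> w ((s^-1)%g p) <= w ((s^-1)%g q).
Proof.
move=> cs JL Ln w_sorted w_pred w_succ p q /andP[pq qL].
set i := (s^-1)%g p; set j := (s^-1)%g q.
have ep : nat_of_ord p = cyclev J L i by rewrite -(is_cycleE cs) permKV.
have eq : nat_of_ord q = cyclev J L j by rewrite -(is_cycleE cs) permKV.
have jL : (j <= L)%N by rewrite -(cycle_leq _ cs JL) permKV.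
have iL : (i <= L)%N by rewrite -(cycle_leq _ cs JL) permKV (leq_trans pq).
rewrite ep eq in pq.
have [iL'|Li] := ltnP i L; have [jL'|Lj] := ltnP j L.
- by apply: w_sorted => //; move: pq; cyclev_lia.
- have -> : j = Ordinal Ln by apply/val_inj => /=; lia.
  have iJ : (i < J)%N by move: pq; cyclev_lia.
  have J1n : (J.-1 < n)%N by lia.
  apply: (le_trans (w_sorted i (Ordinal J1n) _ _)) => /=; try lia.
  by apply: w_pred => /=; lia.
- have -> : i = Ordinal Ln by apply/val_inj => /=; lia.
  have Jj : (J <= j)%N by move: pq; cyclev_lia.
  have Jn : (J < n)%N by lia.
  apply: (le_trans (w_succ (Ordinal Jn) (Ordinal Ln) _ _ _)) => //=; try lia.
  by apply: w_sorted => /=; lia.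
- by have -> : i = j by apply/val_inj => /=; move: pq; cyclev_lia.
Qed.

Lemma ler_sum_single (R : numDomainType) n (F G : 'I_n -> R) (p : 'I_n) :
  (forall i, i != p -> F i = G i) -> (\sum_i F i <= \sum_i G i) = (F p <= G p).
Proof.
move=> FG; rewrite (bigD1 p) //= [X in _ <= X](bigD1 p) //=.
by rewrite [X in _ <= _ + X](eq_bigr F) ?lerD2r // => i /FG ->.
Qed.

Section CosetLeaders.
Variables (n : nat) (hT : finGroupType).

Lemma inCL_slotE k (p : 'I_n) (a : elt n hT) :
  k = 1%N /\ val p = 0%N \/ ~~ odd k /\ val p = k./2 ->
  inCL k a <-> a.1 = 1%g /\ (forall i : 'I_n, val i != val p -> a.2 i = 1%g).
Proof.
case=> [[-> ->]|[k_even ->]]; first by [].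
by rewrite /inCL ifN ?(negbTE k_even) //; apply: contraNneq k_even => ->.
Qed.

Lemma inCL_cycleE k (a : elt n hT) : odd k -> k != 1%N ->
  inCL k a <-> a.2 = one_ffun n hT /\ exists J, (J <= k./2)%N /\ is_cycle a.1 J k./2.
Proof. by move=> k_odd k1; rewrite /inCL (negbTE k1) k_odd. Qed.

End CosetLeaders.

Section Decoder.
Variables (C : numClosedFieldType) (n m : nat) (hT : finGroupType)
          (rho : hT -> 'M[C]_m).
Hypothesis rho1 : rho 1%g = 1%:M.
Hypothesis rhoM : forall a b, rho (a * b)%g = rho a *m rho b.
Hypothesis rhoU : forall h, unitary (rho h).
Variables (v0 : 'cV[C]_m) (u : 'I_n -> C).
Hypothesis u_pos : forall i, 0 < u i.
Hypothesis u_incr : forall i j : 'I_n, (i < j)%N -> u i < u j.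
Variables (rank : elt n hT -> nat) (r : vec C n m) (d : nat -> elt n hT).
Hypothesis d_run : decoding_run rho v0 u rank r d.

Let u_real i : u i \is Num.real := gtr0_real (u_pos i).
Let y k := wcomp rho d k r.

Definition slot_optimal (z : vec C n m) (i : 'I_n) :=
  forall h, recorr v0 (rho h *m z i) <= recorr v0 (z i).

Lemma corr_diag (f : {ffun 'I_n -> hT}) (z : vec C n m) :
  corr v0 u (wact rho (1%g, f) z) = \sum_i u i * recorr v0 (rho (f i) *m z i).
Proof. by apply: eq_bigr => i _; rewrite /wact /= invg1 perm1. Qed.

Lemma corr_perm (a : elt n hT) (z : vec C n m) : a.2 = one_ffun n hT ->
  corr v0 u (wact rho a z) = \sum_i u (a.1 i) * recorr v0 (z i).
Proof.
move=> a2; rewrite /corr (reindex_inj (@perm_inj _ a.1)) /=; apply: eq_bigr => i _.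
by rewrite /wact a2 ffunE rho1 mul1mx permK.
Qed.

Lemma decoder_stage_opt k a : (0 < k <= 2 * n - 1)%N -> inCL k a ->
  corr v0 u (wact rho a (y k.-1)) <= corr v0 u (y k).
Proof.
case: k => // k k_range a_CL; have [_ /(_ a a_CL) [le_da _]] := d_run k_range.
by move: le_da; rewrite (ler_dist_x0 rhoU v0 u_real).
Qed.

Lemma decoder_slot_stage k (p : 'I_n) : (0 < k <= 2 * n - 1)%N ->
  k = 1%N /\ val p = 0%N \/ ~~ odd k /\ val p = k./2 ->
  (forall i, i != p -> y k i = y k.-1 i) /\ slot_optimal (y k) p.
Proof.
case: k => // k k_range kp; have [dk _] := d_run k_range.
have [d1 d2] := (inCL_slotE _ kp).1 dk.
have yE i : y k.+1 i = rho ((d k.+1).2 i) *m y k i by rewrite /y /= /wact d1 invg1 perm1.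
have d_off i : i != p -> (d k.+1).2 i = 1%g by move=> ip; apply: d2.
split=> [i ip|h]; first by rewrite yE d_off // rho1 mul1mx.
pose a : elt n hT := (1%g, [ffun i => if i == p then (h * (d k.+1).2 p)%g else 1%g]).
have a_CL : inCL k.+1 a.
  by apply/(inCL_slotE a kp); split => // i ip; rewrite ffunE ifN.
have := decoder_stage_opt k_range a_CL.
have -> : corr v0 u (y k.+1) = corr v0 u (wact rho (1%g, (d k.+1).2) (y k)).
  by apply: eq_bigr => i _; rewrite yE /wact /= invg1 perm1.
rewrite !corr_diag (ler_sum_single (p := p)) => [|i ip]; last by rewrite ffunE ifN // d_off.
by rewrite ffunE eqxx rhoM -mulmxA ler_pM2l // yE.
Qed.

Lemma decoder_cycle_stage L : (1 <= L)%N -> (L < n)%N ->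
  (forall i : 'I_n, (i <= L)%N -> slot_optimal (y (2 * L)) i) ->
  (forall i j : 'I_n, (i <= j)%N -> (j < L)%N ->
     recorr v0 (y (2 * L) i) <= recorr v0 (y (2 * L) j)) ->
  (forall i : 'I_n, (i <= L)%N -> slot_optimal (y (2 * L).+1) i) /\
  (forall i j : 'I_n, (i <= j <= L)%N ->
     recorr v0 (y (2 * L).+1 i) <= recorr v0 (y (2 * L).+1 j)).
Proof.
move=> L1 Ln y_opt y_sorted.
have k_range : (0 < (2 * L).+1 <= 2 * n - 1)%N by lia.
have k_odd : odd (2 * L).+1 by lia.
have k1 : (2 * L).+1 != 1%N by lia.
have [dk _] := d_run k_range.
have [d2 [J []]] := (inCL_cycleE _ k_odd k1).1 dk.
have -> : ((2 * L).+1)./2 = L by lia.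
set s := (d (2 * L).+1).1 => JL cs.
set z := y (2 * L); pose w i := recorr v0 (z i).
have yE p : y (2 * L).+1 p = z ((s^-1)%g p) by rewrite /y /= /wact d2 ffunE rho1 mul1mx.
have s_opt K t : (K <= L)%N -> is_cycle t K L ->
    \sum_i u (t i) * w i <= \sum_i u (s i) * w i.
  move=> KL ct; have a_CL : inCL (2 * L).+1 (t, one_ffun n hT).
    by apply/(inCL_cycleE _ k_odd k1); split => //; exists K; rewrite (_ : _./2 = L) //; lia.
  by have := decoder_stage_opt k_range a_CL; rewrite !corr_perm.
split=> [p pL h|p q pqL]; rewrite !yE.
  by apply: y_opt; rewrite -(cycle_leq _ cs JL) permKV.
apply: (cycle_sorted cs JL Ln y_sorted _ _ pqL).
  exact: (optimal_cycle_pred u_incr cs JL Ln s_opt).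
exact: (optimal_cycle_succ u_incr cs JL Ln s_opt).
Qed.

Lemma decoder_invariant l : (l < n)%N ->
  (forall i : 'I_n, (i <= l)%N -> slot_optimal (y (2 * l).+1) i) /\
  (forall i j : 'I_n, (i <= j <= l)%N ->
     recorr v0 (y (2 * l).+1 i) <= recorr v0 (y (2 * l).+1 j)).
Proof.
elim: l => [|l IH] ln.
  have k_range : (0 < 1 <= 2 * n - 1)%N by lia.
  have [_ y_opt] := decoder_slot_stage (p := Ordinal ln) k_range (or_introl (conj erefl erefl)).
  split=> [i i0|i j /andP[ij j0]].
    by have -> : i = Ordinal ln by apply/val_inj => /=; lia.
  by have -> : i = j by apply/val_inj => /=; lia.
have [IH_opt IH_sorted] := IH (ltnW ln).
pose p := Ordinal ln.
have k_range : (0 < 2 * l.+1 <= 2 * n - 1)%N by lia.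
have kp : 2 * l.+1 = 1%N /\ val p = 0%N \/ ~~ odd (2 * l.+1) /\ val p = (2 * l.+1)./2.
  by right; split => /=; lia.
have [y_eq y_opt] := decoder_slot_stage k_range kp.
rewrite (_ : (2 * l.+1).-1 = (2 * l).+1) in y_eq; last by lia.
apply: decoder_cycle_stage => //.
  move=> i il; have [->//|ip] := eqVneq i p.
  move=> h; rewrite y_eq //; apply: IH_opt.
  have : nat_of_ord i != l.+1 by apply: contra_neq ip => e; apply/val_inj.
  lia.
move=> i j ij jl.
have ip : i != p by apply/eqP => /(congr1 val) /=; lia.
have jp : j != p by apply/eqP => /(congr1 val) /=; lia.
by rewrite !y_eq //; apply: IH_sorted; lia.
Qed.

Lemma decoder_output_optimal : (0 < n)%N -> forall a,
  corr v0 u (wact rho a (y (2 * n - 1))) <= corr v0 u (y (2 * n - 1)).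
Proof.
move=> n0 a; have n1n : (n.-1 < n)%N by rewrite ltn_predL.
have [y_opt y_sorted] := decoder_invariant n1n.
rewrite (_ : (2 * n.-1).+1 = 2 * n - 1)%N in y_opt y_sorted; last by lia.
set z := y (2 * n - 1) in y_opt y_sorted *.
apply: (le_trans (y := \sum_i u i * recorr v0 (z ((a.1^-1)%g i)))).
  apply: ler_sum => i _; apply: ler_wpM2l; first exact: ltW.
  by apply: y_opt; have := ltn_ord ((a.1^-1)%g i); lia.
apply: (rearrangement_le (w := fun i => recorr v0 (z i))) => i j ij.
  by rewrite le_eqVlt; case: ltngtP ij => // [/u_incr -> | /val_inj ->]; rewrite ?eqxx ?orbT.
by apply: y_sorted; rewrite ij /=; have := ltn_ord j; lia.
Qed.

End Decoder.

Section Faithful.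
Variables (C : numClosedFieldType) (n m : nat) (hT : finGroupType)
          (rho : hT -> 'M[C]_m).
Hypothesis rho_inj : injective rho.
Hypothesis rhoU : forall h, unitary (rho h).
Hypothesis m_gt0 : (0 < m)%N.

Lemma mx_ext_mulmx (A B : 'M[C]_m) : (forall y : 'cV[C]_m, A *m y = B *m y) -> A = B.
Proof.
move=> AB; apply/matrixP => i j.
by have /matrixP/(_ i 0) := AB (delta_mx j 0); rewrite -!colE !mxE.
Qed.

Lemma unitary_mulmx_neq0 (M : 'M[C]_m) : unitary M -> exists y : 'cV[C]_m, M *m y != 0.
Proof.
move=> MU; pose i0 := Ordinal m_gt0.
exists (col i0 (map_mx Num.conj M)^T); rewrite colE mulmxA MU mul1mx.
by apply/negP => /eqP/matrixP/(_ i0 0); rewrite !mxE !eqxx /= => /eqP; rewrite oner_eq0.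
Qed.

(* Test the two actions on vectors supported on a single block. *)
Lemma wact_inj (a b : elt n hT) : (forall x, wact rho a x =1 wact rho b x) -> a = b.
Proof.
move=> ab; pose e i (y : 'cV[C]_m) : vec C n m := fun k => if k == i then y else 0.
have abV i : (a.1^-1)%g i = (b.1^-1)%g i.
  apply/eqP/negPn/negP => ne; have [y ay] := unitary_mulmx_neq0 (rhoU (a.2 i)).
  have := ab (e ((a.1^-1)%g i) y) i; rewrite /wact /e eqxx eq_sym (negbTE ne) mulmx0.
  by move=> ay0; move: ay; rewrite ay0 eqxx.
have ab1 : a.1 = b.1 by apply: invg_inj; apply/permP.
have ab2 i : a.2 i = b.2 i.
  apply: rho_inj; apply: mx_ext_mulmx => y.
  by have := ab (e ((a.1^-1)%g i) y) i; rewrite /wact /e -abV !eqxx.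
by case: a b ab ab1 ab2 {abV} => [s f] [s' f'] /= _ -> ab2; congr pair; apply/ffunP.
Qed.

End Faithful.

Definition lower_count n (s : 'S_n) (j : 'I_n) : nat :=
  #|[set k : 'I_n | (k < j)%N && (s k < s j)%N]|.

Section LowerCount.
Variable n : nat.
Implicit Types (s t sg : 'S_n) (i j : 'I_n).

Lemma card_ltn_ord J : (J <= n)%N -> #|[set i : 'I_n | (i < J)%N]| = J.
Proof.
move=> Jn; have -> : [set i : 'I_n | (i < J)%N] = widen_ord Jn @: [set: 'I_J].
  apply/setP => i; rewrite inE; apply/idP/imsetP => [iJ|[k _ ->]]; last by rewrite /= ltn_ord.
  by exists (Ordinal iJ) => //; apply/val_inj.
by rewrite card_imset ?cardsT ?card_ord // => i j /(congr1 val) /= /val_inj.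
Qed.

Lemma perm_fix_ge_ltn s L i :
  (forall i : 'I_n, (L <= i)%N -> s i = i) -> (i < L)%N -> (s i < L)%N.
Proof.
move=> s_fix iL; rewrite ltnNge; apply/negP => Lsi.
by have /perm_inj si := s_fix _ Lsi; move: Lsi; rewrite si leqNgt iL.
Qed.

Lemma lower_count_cycle_top s sg t J L j : is_cycle sg J L -> (J <= L)%N ->
  j = L :> nat -> (forall i : 'I_n, (L <= i)%N -> s i = i) ->
  (forall i, t i = sg (s i)) -> lower_count t j = J.
Proof.
move=> cs JL jL s_fix tE; have Ln : (L < n)%N by rewrite -jL ltn_ord.
have sj : s j = j by apply: s_fix; rewrite jL.
have sgj : nat_of_ord (sg j) = J by rewrite (is_cycleE cs) jL; cyclev_lia.
rewrite /lower_count -[RHS](@card_ltn_ord J) ?(leq_trans JL (ltnW Ln)) //.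
rewrite -[RHS](card_preimset _ (@perm_inj _ s)); apply: eq_card => k.
rewrite !inE !tE sj sgj; have [kL|Lk] := ltnP k L.
  by have := perm_fix_ge_ltn s_fix kL; rewrite (is_cycleE cs); cyclev_lia.
by rewrite s_fix //; lia.
Qed.

Lemma lower_count_cycle_low s sg t J L j : is_cycle sg J L -> (J <= L)%N ->
  (j < L)%N -> (forall i : 'I_n, (L <= i)%N -> s i = i) ->
  (forall i, t i = sg (s i)) -> lower_count t j = lower_count s j.
Proof.
move=> cs JL jL s_fix tE; apply: eq_card => k; rewrite !inE !tE.
have [kj|//] := ltnP k j.
by rewrite /= (cycle_ltn_mono cs JL (perm_fix_ge_ltn s_fix (ltn_trans kj jL))
                                    (perm_fix_ge_ltn s_fix jL)).
Qed.

End LowerCount.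

Definition slot_index (j : nat) : nat := if j == 0%N then 1%N else (2 * j)%N.

Definition slot_value n (hT : finGroupType) (g : elt n hT) (j : 'I_n) : hT := g.2 (g.1 j).

Section CanonicalForm.
Variables (C : numClosedFieldType) (n m : nat) (hT : finGroupType)
          (rho : hT -> 'M[C]_m).
Hypothesis rho1 : rho 1%g = 1%:M.
Hypothesis rhoM : forall a b, rho (a * b)%g = rho a *m rho b.

Fixpoint eprod (c : nat -> elt n hT) (k : nat) : elt n hT :=
  if k is k'.+1 then emul (c k) (eprod c k') else eone n hT.

Lemma wact_eprod c k (x : vec C n m) : wact rho (eprod c k) x =1 wcomp rho c k x.
Proof.
elim: k x => [|k IH] x /=; first exact: wact_one.
by move=> i; rewrite wact_mul //; apply: wact_ext; apply: IH.
Qed.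

(* The slot leaders are read off from the H-components of the product, the
   cycle leaders from the lower counts of its permutation. *)
Lemma eprod_canonical c : (forall k, (0 < k <= 2 * n - 1)%N -> inCL k (c k)) ->
  forall l, (l < n)%N ->
  [/\ forall i : 'I_n, (l < i)%N ->
        (eprod c (2 * l).+1).1 i = i /\ (eprod c (2 * l).+1).2 i = 1%g,
      forall j : 'I_n, (j <= l)%N ->
        slot_value (eprod c (2 * l).+1) j = (c (slot_index j)).2 j
    & forall j : 'I_n, (1 <= j <= l)%N ->
        is_cycle (c (2 * j).+1).1 (lower_count (eprod c (2 * l).+1).1 j) j].
Proof.
move=> c_CL; elim=> [|l IH] ln.
  have k1 : (0 < 1 <= 2 * n - 1)%N by lia.
  have [c1 c2] := (inCL_slotE (p := Ordinal ln) (c 1%N)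
    (or_introl (conj erefl erefl))).1 (c_CL _ k1).
  rewrite /= /emul /= c1 mulg1; split=> [i i0|j j0|j].
  - by rewrite perm1 ffunE invg1 perm1 /eone /one_ffun ffunE mulg1 c2 //=; lia.
  - rewrite /slot_value perm1 ffunE invg1 perm1 /eone /one_ffun ffunE mulg1 /slot_index.
    by have -> : nat_of_ord j == 0%N by lia.
  - lia.
have [I1 I2 I3] := IH (ltnW ln).
rewrite (_ : 2 * l.+1 = (2 * l).+2)%N; last by lia.
set P := eprod c (2 * l).+1 in I1 I2 I3 *; set s := P.1 in I1 I2 I3 *.
have s_fix (i : 'I_n) : (l.+1 <= i)%N -> s i = i by move=> /I1 [].
have k2 : (0 < (2 * l).+2 <= 2 * n - 1)%N by lia.
have k3 : (0 < (2 * l).+3 <= 2 * n - 1)%N by lia.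
have k2p : (2 * l).+2 = 1%N /\ val (Ordinal ln) = 0%N \/
           ~~ odd (2 * l).+2 /\ val (Ordinal ln) = ((2 * l).+2)./2 by right; split => /=; lia.
have [c21 c22] := (inCL_slotE _ k2p).1 (c_CL _ k2).
have k3_odd : odd (2 * l).+3 by lia.
have k3_1 : (2 * l).+3 != 1%N by lia.
have [c31 [J []]] := (inCL_cycleE _ k3_odd k3_1).1 (c_CL _ k3).
rewrite (_ : ((2 * l).+3)./2 = l.+1); last by lia.
set sg := (c (2 * l).+3).1 => JL cs.
have eprodS k : eprod c k.+1 = emul (c k.+1) (eprod c k) by [].
have PE1 (i : 'I_n) : (eprod c (2 * l).+3).1 i = sg (s i).
  by rewrite !eprodS /emul -/P c21 mulg1 permM.
have PE2 (i : 'I_n) : (eprod c (2 * l).+3).2 i =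
    ((c (2 * l).+2).2 ((sg^-1)%g i) * P.2 ((sg^-1)%g i))%g.
  by rewrite !eprodS /emul -/P c21 c31 /one_ffun !ffunE mul1g invg1 perm1.
split=> [i li|j jl|j /andP[j1 jl]].
- have sg_fix := cycle_fix cs JL li.
  have sgVi : (sg^-1)%g i = i by rewrite -{1}sg_fix permK.
  rewrite PE1 PE2 sgVi; have [-> ->] := I1 i (ltnW li).
  by rewrite sg_fix mulg1 c22 //=; lia.
- rewrite /slot_value PE1 PE2 permK; have [lj|jl'] := ltnP l j.
    have [-> ->] := I1 j lj; rewrite mulg1 /slot_index.
    have -> : (nat_of_ord j == 0%N) = false by lia.
    by have -> : (2 * j)%N = (2 * l).+2 by lia.
  rewrite c22 ?mul1g; first exact: I2 j jl'.
  by have := perm_fix_ge_ltn s_fix (jl' : (j < l.+1)%N); rewrite /=; lia.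
- have [lj|jl'] := ltnP l j.
    have ej : nat_of_ord j = l.+1 by lia.
    rewrite (_ : (2 * j).+1 = (2 * l).+3)%N; last by lia.
    by rewrite (lower_count_cycle_top cs JL ej s_fix PE1) ej.
  by rewrite (lower_count_cycle_low cs JL jl' s_fix PE1); apply: I3; rewrite j1.
Qed.

End CanonicalForm.

Section AdjacentTransposition.
Variable n : nat.
Implicit Types (s t tau : 'S_n) (a b j : 'I_n).

Lemma is_adj_transpE tau i : is_adj_transp tau i ->
  forall p, nat_of_ord (tau p) =
    (if p == i :> nat then i.+1 else if p == i.+1 :> nat then i else p).
Proof. exact. Qed.

Lemma adj_transp_ltn tau i (x y : 'I_n) : is_adj_transp tau i ->
  ~~ ((x == i :> nat) && (y == i.+1 :> nat) || (x == i.+1 :> nat) && (y == i :> nat)) ->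
  (tau x < tau y)%N = (x < y)%N.
Proof. by move=> tauE; rewrite !(is_adj_transpE tauE); repeat case: ifP; lia. Qed.

(* Only the pair of positions sent to i and i+1 changes its relative order. *)
Lemma lower_count_adj_transp s tau t i a b j : is_adj_transp tau i ->
  (forall k, t k = tau (s k)) -> s a = i :> nat -> s b = i.+1 :> nat ->
  j != (if (a < b)%N then b else a) -> lower_count t j = lower_count s j.
Proof.
move=> tauE tE sa sb j_max; apply: eq_card => k; rewrite !inE !tE.
have [kj|//] := ltnP k j; rewrite /= (adj_transp_ltn tauE) //.
have s_inj (x y : 'I_n) : s x = s y :> nat -> x = y by move/val_inj/perm_inj.
apply/negP => /orP[/andP[/eqP ska /eqP sjb]|/andP[/eqP skb /eqP sja]].
  have ka : k = a by apply: s_inj; rewrite ska sa.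
  have jb : j = b by apply: s_inj; rewrite sjb sb.
  by move: j_max; rewrite -ka -jb kj eqxx.
have kb : k = b by apply: s_inj; rewrite skb sb.
have ja : j = a by apply: s_inj; rewrite sja sa.
by move: j_max; rewrite -kb -ja ltnNge (ltnW kj) eqxx.
Qed.

End AdjacentTransposition.

Lemma slot_index_half K : (0 < K)%N -> ~~ (odd K && (K != 1%N)) -> slot_index K./2 = K.
Proof. by move=> K_gt0 K_even; rewrite /slot_index; move: K_even; case: ifP; lia. Qed.

Section CanonicalFactors.
Variables (C : numClosedFieldType) (n m : nat) (hT : finGroupType)
          (rho : hT -> 'M[C]_m).
Hypothesis rho1 : rho 1%g = 1%:M.
Hypothesis rhoM : forall a b, rho (a * b)%g = rho a *m rho b.
Hypothesis rho_inj : injective rho.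
Hypothesis rhoU : forall h, unitary (rho h).
Hypotheses (m_gt0 : (0 < m)%N) (n_gt0 : (0 < n)%N).
Implicit Types (p q g x : elt n hT) (c : nat -> elt n hT).

Lemma canonical_factors g c : canonical_form rho g c ->
  (forall j : 'I_n, (c (slot_index j)).2 j = slot_value g j) /\
  (forall j : 'I_n, (1 <= j)%N -> is_cycle (c (2 * j).+1).1 (lower_count g.1 j) j).
Proof.
move=> [c_CL gE]; have -> : g = eprod c (2 * n - 1).
  by apply: (wact_inj rho_inj rhoU m_gt0) => x i; rewrite gE wact_eprod.
have n1n : (n.-1 < n)%N by rewrite ltn_predL.
have [_ I2 I3] := eprod_canonical c_CL n1n.
rewrite (_ : (2 * n.-1).+1 = 2 * n - 1)%N in I2 I3; last by lia.
split=> [j|j j1]; first by rewrite I2 //; have := ltn_ord j; lia.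
by apply: I3; rewrite j1 /=; have := ltn_ord j; lia.
Qed.

Lemma canonical_factor_eq p q c c' K (j : 'I_n) :
  canonical_form rho p c -> canonical_form rho q c' ->
  (0 < K <= 2 * n - 1)%N -> j = K./2 :> nat ->
  (odd K && (K != 1%N) -> lower_count p.1 j = lower_count q.1 j) ->
  (~~ (odd K && (K != 1%N)) -> slot_value p j = slot_value q j) -> c K = c' K.
Proof.
move=> cp cq K_range jK count_eq slot_eq.
have [P1 P2] := canonical_factors cp; have [Q1 Q2] := canonical_factors cq.
have [cp_CL _] := cp; have [cq_CL _] := cq.
rewrite [c K]surjective_pairing [c' K]surjective_pairing.
have [/andP[K_odd K1]|K_slot] := boolP (odd K && (K != 1%N)).
  have [-> _] := (inCL_cycleE _ K_odd K1).1 (cp_CL _ K_range).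
  have [-> _] := (inCL_cycleE _ K_odd K1).1 (cq_CL _ K_range).
  have KE : K = (2 * j).+1 by lia.
  have j1 : (1 <= j)%N by lia.
  have cnt : lower_count p.1 j = lower_count q.1 j by apply: count_eq; rewrite K_odd K1.
  congr pair; apply: (@is_cycle_inj _ _ _ (lower_count p.1 j) j).
    by rewrite KE; apply: P2.
  by rewrite cnt KE; apply: Q2.
have Kj : K = 1%N /\ j = 0%N :> nat \/ ~~ odd K /\ j = K./2 :> nat.
  have [K1|K1] := eqVneq K 1%N; first by left; rewrite jK K1.
  by right; split => //; move: K_slot; rewrite K1 andbT.
have [-> a2] := (inCL_slotE _ Kj).1 (cp_CL _ K_range).
have [-> b2] := (inCL_slotE _ Kj).1 (cq_CL _ K_range).
congr pair; apply/ffunP => i; have [->|ij] := eqVneq i j.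
  by rewrite -(slot_index_half _ K_slot) ?(proj1 (andP K_range)) // -jK P1 Q1 slot_eq.
have ij' : val i != val j by apply: contra_neq ij => /val_inj.
by rewrite a2 ?b2.
Qed.

Lemma card_factor_diff_le1 c c' K0 :
  (forall K, (0 < K <= 2 * n - 1)%N -> c K != c' K -> K = K0) ->
  (#|[set k : 'I_(2 * n - 1) | c k.+1 != c' k.+1]| <= 1)%N.
Proof.
move=> diff_K0; apply/card_le1P => k; rewrite inE => ck l; rewrite !inE.
apply/idP/eqP => [cl|->//]; apply/val_inj => /=.
have k_range : (0 < k.+1 <= 2 * n - 1)%N by have := ltn_ord k; lia.
have l_range : (0 < l.+1 <= 2 * n - 1)%N by have := ltn_ord l; lia.
by have := diff_K0 _ k_range ck; have := diff_K0 _ l_range cl; lia.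
Qed.

Lemma canonical_diff_slot p q c c' (j0 : 'I_n) :
  canonical_form rho p c -> canonical_form rho q c' -> p.1 = q.1 ->
  (forall j, j != j0 -> slot_value p j = slot_value q j) ->
  (#|[set k : 'I_(2 * n - 1) | c k.+1 != c' k.+1]| <= 1)%N.
Proof.
move=> cp cq pq slot_eq; apply: (@card_factor_diff_le1 _ _ (slot_index j0)) => K K_range.
apply: contraNeq => K_ne; apply/eqP.
have Kn : (K./2 < n)%N by lia.
apply: (canonical_factor_eq (j := Ordinal Kn) cp cq K_range) => // [_|K_slot].
  by rewrite pq.
apply: slot_eq; apply: contra_neq K_ne => <-.
by rewrite slot_index_half ?(proj1 (andP K_range)).
Qed.

Lemma canonical_diff_cycle p q c c' (j0 : 'I_n) :
  canonical_form rho p c -> canonical_form rho q c' ->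
  (forall j, slot_value p j = slot_value q j) ->
  (forall j, j != j0 -> lower_count p.1 j = lower_count q.1 j) ->
  (#|[set k : 'I_(2 * n - 1) | c k.+1 != c' k.+1]| <= 1)%N.
Proof.
move=> cp cq slot_eq count_eq; apply: (@card_factor_diff_le1 _ _ (2 * j0).+1) => K K_range.
apply: contraNeq => K_ne; apply/eqP.
have Kn : (K./2 < n)%N by lia.
apply: (canonical_factor_eq (j := Ordinal Kn) cp cq K_range) => // K_cycle.
apply: count_eq; apply: contra_neq K_ne => <- /=; lia.
Qed.

(* A slot generator changes only the slot value at position q^-1(1), an
   adjacent transposition only the lower count at the later of the two
   swapped positions. *)
Lemma generator_canonical_diff (XH : {set hT}) p q x c c' :
  canonical_form rho p c -> canonical_form rho q c' -> inX XH x -> p = emul x q ->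
  (#|[set k : 'I_(2 * n - 1) | c k.+1 != c' k.+1]| <= 1)%N.
Proof.
move=> cp cq x_X pE; subst p; case: x_X => [[x1 [_ x2]]|[x2 [i [i_lt tauE]]]].
  pose i0 := Ordinal n_gt0.
  apply: (canonical_diff_slot (j0 := (q.1^-1)%g i0) cp cq); first by rewrite /= x1 mulg1.
  move=> j j_ne; rewrite /slot_value /= x1 mulg1 ffunE invg1 perm1 x2 ?mul1g //.
  apply: contra_neq j_ne => q_j0; rewrite -(permK q.1 j); congr ((q.1^-1)%g _).
  exact: val_inj.
have [i_n i1_n] : (i < n)%N /\ (i.+1 < n)%N by lia.
pose a := (q.1^-1)%g (Ordinal i_n); pose b := (q.1^-1)%g (Ordinal i1_n).
apply: (canonical_diff_cycle (j0 := if (a < b)%N then b else a) cp cq).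
  by move=> j; rewrite /slot_value /= permM ffunE x2 ffunE mul1g permK.
move=> j j_ne; apply: (lower_count_adj_transp tauE _ _ _ j_ne).
- by move=> k; rewrite /= permM.
- by rewrite /a permKV.
- by rewrite /b permKV.
Qed.

End CanonicalFactors.


Section DecodingRegions.
Variables (C : numClosedFieldType) (n m : nat) (hT : finGroupType)
          (rho : hT -> 'M[C]_m).
Hypothesis rho1 : rho 1%g = 1%:M.
Hypothesis rhoM : forall a b, rho (a * b)%g = rho a *m rho b.
Variables (v0 : 'cV[C]_m) (u : 'I_n -> C).
Implicit Types (a h : elt n hT) (v r : vec C n m).

Lemma ml_in_coset h out r : DR rho v0 u h r ->
  (forall a, dist (wact rho out r) (x0 v0 u) <= dist (wact rho a r) (x0 v0 u)) ->
  inSh rho v0 u out h.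
Proof.
move=> DRr out_ml; apply: NNPP => out_nin.
by have := lt_le_trans (DRr out out_nin) (out_ml h); rewrite ltxx.
Qed.

Lemma inSh_wact a h v : inSh rho v0 u a h -> wact rho h v =1 x0 v0 u ->
  wact rho a v =1 x0 v0 u.
Proof. by move=> [s [s_stab aE]] hv i; rewrite aE (wact_ext _ _ hv). Qed.

(* A codeword b x0 is decoded by einv b, so DR(h) contains it only if h
   itself sends it to x0. *)
Lemma DR_codeword h v : DR rho v0 u h v -> codeword rho v0 u v -> wact rho h v =1 x0 v0 u.
Proof.
move=> DRv [b vE]; have bv : wact rho (einv b) v =1 x0 v0 u.
  by move=> i; rewrite (wact_ext _ _ vE) wact_invK.
have [s [s_stab sE]] : inSh rho v0 u (einv b) h.
  apply: NNPP => b_nin; have := le_lt_trans (dist_ge0 _ _) (DRv _ b_nin).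
  by rewrite (dist_ext bv (frefl _)) distxx ltxx.
have s_hv : wact rho s (wact rho h v) =1 wact rho s (x0 v0 u).
  by move=> i; rewrite -sE bv s_stab.
move=> i; rewrite -(wact_invK rho1 rhoM s (wact rho h v)) -[RHS](wact_invK rho1 rhoM s).
exact: wact_ext s_hv i.
Qed.

End DecodingRegions.

Section MaximumLikelihood.
Variables (C : numClosedFieldType) (n m : nat) (hT : finGroupType)
          (rho : hT -> 'M[C]_m).
Hypothesis rho1 : rho 1%g = 1%:M.
Hypothesis rhoM : forall a b, rho (a * b)%g = rho a *m rho b.
Hypothesis rhoU : forall h, unitary (rho h).
Variables (v0 : 'cV[C]_m) (u : 'I_n -> C).
Hypothesis n_gt0 : (0 < n)%N.
Hypothesis u_pos : forall i, 0 < u i.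
Hypothesis u_incr : forall i j : 'I_n, (i < j)%N -> u i < u j.
Implicit Types (a g out : elt n hT) (v r w : vec C n m).

Lemma decoder_output_ml rank r d out : decoding_run rho v0 u rank r d ->
  (forall x, wact rho out x =1 wcomp rho d (2 * n - 1) x) ->
  forall a, dist (wact rho out r) (x0 v0 u) <= dist (wact rho a r) (x0 v0 u).
Proof.
move=> d_run outE a; set z := wcomp rho d (2 * n - 1) r.
have u_real i : u i \is Num.real := gtr0_real (u_pos i).
have out_r : wact rho out r =1 wact rho (eone n hT) z by move=> i; rewrite wact_one // outE.
have a_r : wact rho a r =1 wact rho (emul a (einv out)) z.
  move=> i; rewrite wact_mul //; apply: wact_ext => j.
  by rewrite -(wact_invK rho1 rhoM out r j); apply: wact_ext => k; rewrite outE.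
rewrite (dist_ext out_r (frefl _)) (dist_ext a_r (frefl _)) ler_dist_x0 //.
have -> : corr v0 u (wact rho (eone n hT) z) = corr v0 u z.
  by apply: eq_bigr => i _; rewrite wact_one.
exact: (decoder_output_optimal rho1 rhoM rhoU u_pos u_incr d_run n_gt0).
Qed.

Lemma nearest_neighbor_x0 g out w v :
  wact rho g w =1 x0 v0 u -> wact rho out v =1 x0 v0 u ->
  nearest_neighbor rho v0 u w v ->
  nearest_neighbor rho v0 u (x0 v0 u) (wact rho (emul g (einv out)) (x0 v0 u)).
Proof.
move=> gw outv [_ [_ dmin]].
have a_x0 : wact rho (emul g (einv out)) (x0 v0 u) =1 wact rho g v.
  move=> i; rewrite wact_mul //; apply: wact_ext => j.
  by rewrite -(wact_invK rho1 rhoM out v j); apply: wact_ext => k; rewrite outv.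
split; first by exists (eone n hT) => i; rewrite wact_one.
split; first by exists (emul g (einv out)).
rewrite (_ : dist _ _ = dist w v) //.
by rewrite -(dist_wact rhoU g w v); apply: dist_ext => i; rewrite ?gw ?a_x0.
Qed.

End MaximumLikelihood.

Unset Implicit Arguments.

Theorem mainTheorem15
  (C : numClosedFieldType) (n m : nat) (hT : finGroupType)
  (rho : hT -> 'M[C]_m) (XH : {set hT}) (v0 : 'cV[C]_m) (u : 'I_n -> C) :
  (0 < n)%N ->
  (* H = rho(hT) is a finite unitary subgroup of GL_m(C), generated by rho(XH) *)
  injective rho -> rho 1%g = 1%:M ->
  (forall a b, rho (a * b)%g = rho a *m rho b) ->
  (forall h, unitary (rho h)) ->
  <<XH>>%g = [set: hT] ->
  (* initial vector *)
  vnormm v0 = 1 ->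
  (forall h, h != 1%g -> vnormm (rho 1%g *m v0 - v0) < vnormm (rho h *m v0 - v0)) ->
  (forall i, 0 < u i) ->
  (forall i j : 'I_n, (i < j)%N -> u i < u j) ->
  vnorm (x0 v0 u) = 1 ->
  (* Nearest Neighbors Property for X_{2n-1} *)
  NN_property rho v0 u (inX XH) ->
  forall (g : elt n hT) (ginvx0 v r : vec C n m),
    wact rho g ginvx0 =1 x0 v0 u ->           (* ginvx0 = g^-1 x0 *)
    nearest_neighbor rho v0 u ginvx0 v ->
    (exists h, DR rho v0 u h v /\ DR rho v0 u h r) ->
  forall (rank : elt n hT -> nat), injective rank ->
  forall (d : nat -> elt n hT), decoding_run rho v0 u rank r d ->
  forall (out : elt n hT), (forall x, wact rho out x =1 wcomp rho d (2 * n - 1) x) ->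
  forall (c c' : nat -> elt n hT),
    canonical_form rho g c -> canonical_form rho out c' ->
    (#|[set k : 'I_(2 * n - 1) | c k.+1 != c' k.+1]| <= 1)%N.
Proof.
move=> n_gt0 rho_inj rho1 rhoM rhoU _ v0_norm _ u_pos u_incr _ NN g ginvx0 v r gw v_nn
  [h [DRv DRr]] rank _ d d_run out outE c c' cg cout.
have m_gt0 := vnormm_eq1_dim_gt0 v0_norm.
have out_ml := decoder_output_ml rho1 rhoM rhoU n_gt0 u_pos u_incr d_run outE.
have [_ [v_cw _]] := v_nn.
have outv := inSh_wact (ml_in_coset DRr out_ml) (DR_codeword rho1 rhoM DRv v_cw).
pose a := emul g (einv out).
have gE : g = emul a out by rewrite emul_divK.
case: (NN a (nearest_neighbor_x0 rho1 rhoM rhoU gw outv v_nn)) => [a_X|[b [b_X bK]]].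
  exact: generator_canonical_diff cg cout a_X gE.
have outE' : out = emul b g.
  apply: (wact_inj rho_inj rhoU m_gt0) => x i; rewrite wact_mul // -(bK (wact rho out x) i).
  by apply: wact_ext => j; rewrite gE wact_mul.
rewrite (_ : [set k | _] = [set k : 'I_(2 * n - 1) | c' k.+1 != c k.+1]).
  exact: generator_canonical_diff cout cg b_X outE'.
by apply/setP => k; rewrite !inE eq_sym.
Qed.
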